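(* Assume the setting in the context (deterministic $\Phi$ with $\operatorname{rank}(\widehat\Phi_1)=k$). Then, for both the spectral and Frobenius norm, $$\|\sin\angle(\mathcal R(Q),\mathcal R(U_k))\|_{2,F}\le\frac{\delta_k^{2q+1}\|\widehat\Phi_2\widehat\Phi_1^\dagger\|_2\,\|\Sigma_\perp\|_{2,F}}{\sigma_k\sqrt{1+\gamma^{4q+4}\|\widehat\Phi_2\widehat\Phi_1^\dagger\|_2^2}},$$ $$\|\sin\angle(\mathcal R(P),\mathcal R(V_k))\|_{2,F}\le\frac{\delta_k^{2q}\|\widehat\Phi_2\widehat\Phi_1^\dagger\|_2\,\|\Sigma_\perp\|_{2,F}}{\sigma_k\sqrt{1+\gamma^{4q+2}\|\widehat\Phi_2\widehat\Phi_1^\dagger\|_2^2}}.$$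
   Context: Let $A\in\mathbb R^{m\times n}$ with $m\ge n$ have full SVD $A=U\Sigma V^T$, with singular values $\sigma_1\ge\sigma_2\ge\dots\ge\sigma_n\ge 0$. Fix an integer $k\ge1$ with $\sigma_k>0$ (the paper regards $A$ as having numerical rank $k$, i.e. $\sigma_k$ well separated from $\sigma_{k+1}$). Write $U=[U_k\ U_\perp]$ with $U_k\in\mathbb R^{m\times k}$ the first $k$ left singular vectors $u_1,\dots,u_k$, $U_\perp\in\mathbb R^{m\times(m-k)}$ the rest; $V=[V_k\ V_\perp]$ with $V_k\in\mathbb R^{n\times k}$ the first $k$ right singular vectors $v_1,\dots,v_k$; $\Sigma_k=\mathrm{diag}(\sigma_1,\dots,\sigma_k)$ and $\Sigma_\perp$ the remaining diagonal block of $\Sigma$ containing $\sigma_{k+1},\dots,\sigma_n$ (so $\|\Sigma_\perp\|_2=\sigma_{k+1}$, $\|\Sigma_\perp\|_F=(\sum_{i>k}\sigma_i^2)^{1/2}$). The notation $\|\cdot\|_{2,F}$ means the statement holds for both the spectral and Frobenius norm. Let $p\ge1$ be an oversampling integer, $d=k+p<n$, and $q\ge0$ an integer (power-iteration parameter). RU-QLP (Randomized Unpivoted QLP): given $\Phi\in\mathbb R^{m\times d}$, let $\bar P\in\mathbb R^{n\times d}$ have orthonormal columns spanning the range of $(A^TA)^qA^T\Phi$ (assumed of rank $d$); compute the thin unpivoted QR factorization $A\bar P=QR$ with $Q\in\mathbb R^{m\times d}$ having orthonormal columns and $R\in\mathbb R^{d\times d}$ upper triangular; compute the thin unpivoted QR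 factorization $R^T=\widetilde P\widetilde R$; set $P=\bar P\widetilde P\in\mathbb R^{n\times d}$ and $L=\widetilde R^T$ (lower triangular), giving $\hat A=QLP^T$. Partition $R=\begin{bmatrix}R_{11}&R_{12}\\0&R_{22}\end{bmatrix}$ and $L=\begin{bmatrix}L_{11}&0\\L_{21}&L_{22}\end{bmatrix}$ with $R_{11},L_{11}\in\mathbb R^{k\times k}$. Define $\widehat\Phi_1=U_k^T\Phi\in\mathbb R^{k\times d}$ and $\widehat\Phi_2=U_\perp^T\Phi\in\mathbb R^{(m-k)\times d}$, assume $\widehat\Phi_1$ has rank $k$, and let $\dagger$ denote the Moore–Penrose inverse. Set $\delta_i=\sigma_{k+1}/\sigma_i$ for $i=1,\dots,k$ and $\gamma=\sigma_n/\sigma_1$. Principal angles between a subspace $\mathcal X$ and a $k$-dimensional subspace $\mathcal Y$ (with $\dim\mathcal X\ge k$) are the $k$ canonical angles $0\le\alpha_1\le\dots\le\alpha_k\le\pi/2$; for orthonormal bases $X$, $Y$, the values $\sin\alpha_i$ are the singular values of $(I-XX^T)Y$. $\sin\angle(\mathcal X,\mathcal Y)$ denotes the $k\times k$ diagonal matrix $\mathrm{diag}(\sin\alpha_1,\dots,\sin\alpha_k)$. *)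

From HB Require Import structures.
From mathcomp Require Import all_boot all_order all_algebra.
From mathcomp Require Import classical_sets reals.
Set Implicit Arguments. Unset Strict Implicit. Unset Printing Implicit Defensive.
Import Order.TTheory GRing.Theory Num.Theory.
Local Open Scope ring_scope.
Local Open Scope classical_set_scope.

Definition vnorm {R : realType} {n : nat} (x : 'cV[R]_n) : R :=
  Num.sqrt (\sum_(i < n) x i 0 ^+ 2).

Definition spec_norm {R : realType} {m n : nat} (M : 'M[R]_(m, n)) : R :=
  sup [set r : R | exists x : 'cV[R]_n, vnorm x = 1 /\ r = vnorm (M *m x)].

Definition frob_norm {R : realType} {m n : nat} (M : 'M[R]_(m, n)) : R :=
  Num.sqrt (\sum_(i < m) \sum_(j < n) M i j ^+ 2).

Inductive normkind := Spectral | Frobenius.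

Definition mnorm {R : realType} {m n : nat} (nk : normkind) (M : 'M[R]_(m, n)) : R :=
  match nk with Spectral => spec_norm M | Frobenius => frob_norm M end.

(* Rectangular diagonal matrix Sigma with diagonal entries sv 0, sv 1, ...
   (sv i is sigma_{i+1} in the paper's 1-based numbering). *)
Definition svd_diag {R : realType} {m n : nat} (sv : nat -> R) : 'M[R]_(m, n) :=
  \matrix_(i < m, j < n) (if (i : nat) == (j : nat) then sv j else 0).

Definition MP_inverse {R : realType} {m n : nat} (M : 'M[R]_(m, n)) (X : 'M[R]_(n, m)) : Prop :=
  [/\ M *m X *m M = M, X *m M *m X = X,
      (M *m X)^T = M *m X & (X *m M)^T = X *m M].

(* D = sin angle(R(X), R(Y)) : for orthonormal bases X (of the subspace X, dim a)
   and Y (of the b-dimensional subspace Y), D is the b x b diagonal matrix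
   diag(sin alpha_1, ..., sin alpha_b) (nondecreasing, nonnegative) whose
   diagonal entries are the singular values of (I - X X^T) Y, i.e. there is a
   thin SVD (I - X X^T) Y = W1 D W2^T. *)
Definition sin_angles {R : realType} {m a b : nat}
  (X : 'M[R]_(m, a)) (Y : 'M[R]_(m, b)) (D : 'M[R]_b) : Prop :=
  [/\ is_diag_mx D,
      (forall i : 'I_b, 0 <= D i i),
      (forall i j : 'I_b, (i <= j)%N -> D i i <= D j j) &
      exists (W1 : 'M[R]_(m, b)) (W2 : 'M[R]_b),
        [/\ W1^T *m W1 = 1%:M, W2^T *m W2 = 1%:M &
            (1%:M - X *m X^T) *m Y = W1 *m D *m W2^T]].

From HB Require Import structures.
From mathcomp Require Import all_boot all_order all_algebra.
From mathcomp Require Import classical_sets reals.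
From mathcomp Require Import ring lra zify.
Import Order.TTheory GRing.Theory Num.Theory.
Local Open Scope ring_scope.

(* Write W for U (resp. V), X for Q (resp. P), G := Phihat_2 Phihat_1^+ and e := 2q+2
   (resp. 2q+1).  Because U^T Phi Phihat_1^+ = [I; G], the range relations
   A (A^T A)^q A^T Phi = Q R X0 and (A^T A)^q A^T Phi = Pbar X0 turn into
   W [I; F] = X Y with F := Sigma_perp^e G Sigma_k^-e.  For every Z',
   W_k Z = W [Z - Z'; -F Z'] + X Y Z', so projecting off R(X) gives
   |(I - X X^T) W_k Z|^2 <= |Z - Z'|^2 + |F Z'|^2.  Taking Z' = z / (1 + |F z|^2)
   bounds the spectral sine by T / sqrt (1 + T^2) whenever |F| <= T, and taking
   Z = I, Z' = (I + F^T F)^-1 bounds the squared Frobenius sine by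
   sum_j s_j / (1 + s_j), s_j = |F^T e_j|^2.  It remains to use
   |F| <= sigma_{k+1}^e |G| / sigma_k^e, sqrt s_j <= b_j := sigma_{k+j}^e |G| / sigma_k^e
   and b_j >= gamma^e |G|, together with the monotonicity of s / (1 + s). *)

Set Implicit Arguments.
Unset Strict Implicit.

Section RealInequalities.
Variable R : realType.

Lemma ler_wXn2r (x y : R) n : 0 <= x -> x <= y -> x ^+ n <= y ^+ n.
Proof. by move=> x_ge0 xy; apply: lerXn2r; rewrite // nnegrE (le_trans x_ge0). Qed.

Lemma le_of_sqr_le (x y : R) : 0 <= y -> x ^+ 2 <= y ^+ 2 -> x <= y.
Proof. by move=> y_ge0 h; have [|] := lerP x y => //; nra. Qed.

Lemma ler_frac1D (s t : R) : 0 <= s -> s <= t -> s / (1 + s) <= t / (1 + t).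
Proof.
move=> s_ge0 st; have t_ge0 : 0 <= t by apply: le_trans st.
rewrite ler_pdivrMr; last by lra.
by rewrite mulrAC ler_pdivlMr; [nra | lra].
Qed.

End RealInequalities.

Section FrobeniusInnerProduct.
Variable R : realType.

Definition mxdot m n (M N : 'M[R]_(m, n)) : R := \tr (M^T *m N).
Definition mxnorm2 m n (M : 'M[R]_(m, n)) : R := mxdot M M.

Lemma mxnorm2E m n (M : 'M[R]_(m, n)) : mxnorm2 M = \sum_i \sum_j M i j ^+ 2.
Proof.
rewrite /mxnorm2 /mxdot /mxtrace exchange_big /=; apply: eq_bigr => i _.
by rewrite mxE; apply: eq_bigr => j _; rewrite mxE expr2.
Qed.

Lemma mxentry_sqr_le m n (M : 'M[R]_(m, n)) i j : M i j ^+ 2 <= mxnorm2 M.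
Proof.
rewrite mxnorm2E (bigD1 i) //= (bigD1 j) //= -addrA lerDl.
by apply: addr_ge0; apply: sumr_ge0 => *; rewrite ?sumr_ge0 // => *; apply: sqr_ge0.
Qed.

Lemma mxnorm2_ge0 m n (M : 'M[R]_(m, n)) : 0 <= mxnorm2 M.
Proof. by rewrite mxnorm2E; do 2![apply: sumr_ge0 => ? _]; apply: sqr_ge0. Qed.

Lemma mxnorm2_eq0 m n (M : 'M[R]_(m, n)) : mxnorm2 M = 0 -> M = 0.
Proof.
move=> M0; apply/matrixP => i j; rewrite mxE; apply/eqP; rewrite -sqrf_eq0 eq_le.
by rewrite sqr_ge0 andbT -M0 mxentry_sqr_le.
Qed.

Lemma mxnorm2_tr m n (M : 'M[R]_(m, n)) : mxnorm2 M^T = mxnorm2 M.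
Proof.
by rewrite !mxnorm2E exchange_big; apply: eq_bigr => i _; apply: eq_bigr => j _; rewrite mxE.
Qed.

Lemma mxdotC m n (M N : 'M[R]_(m, n)) : mxdot M N = mxdot N M.
Proof. by rewrite /mxdot -mxtrace_tr trmx_mul trmxK. Qed.

Lemma mxdotZr m n a (M N : 'M[R]_(m, n)) : mxdot M (a *: N) = a * mxdot M N.
Proof. by rewrite /mxdot -scalemxAr mxtraceZ. Qed.

Lemma mxnorm2Z m n a (M : 'M[R]_(m, n)) : mxnorm2 (a *: M) = a ^+ 2 * mxnorm2 M.
Proof. by rewrite /mxnorm2 mxdotZr mxdotC mxdotZr mulrA -expr2. Qed.

Lemma mxnorm2N m n (M : 'M[R]_(m, n)) : mxnorm2 (- M) = mxnorm2 M.
Proof. by rewrite -scaleN1r mxnorm2Z sqrrN expr1n mul1r. Qed.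

Lemma mxnorm2D m n (M N : 'M[R]_(m, n)) :
  mxnorm2 (M + N) = mxnorm2 M + 2 * mxdot M N + mxnorm2 N.
Proof.
rewrite /mxnorm2 /mxdot [(M + N)^T]linearD /= mulmxDl !mulmxDr !mxtraceD.
by rewrite -[\tr (N^T *m M)]/(mxdot N M) mxdotC /mxdot mulr2n mulrDl mul1r; ring.
Qed.

Lemma mxnorm2_col_mx m1 m2 n (M1 : 'M[R]_(m1, n)) (M2 : 'M[R]_(m2, n)) :
  mxnorm2 (col_mx M1 M2) = mxnorm2 M1 + mxnorm2 M2.
Proof. by rewrite /mxnorm2 /mxdot tr_col_mx mul_row_col mxtraceD. Qed.

Lemma mxnorm2_isometryl p m n (W : 'M[R]_(p, m)) (M : 'M[R]_(m, n)) :
  W^T *m W = 1%:M -> mxnorm2 (W *m M) = mxnorm2 M.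
Proof. by move=> W_orth; rewrite /mxnorm2 /mxdot trmx_mul -mulmxA (mulmxA W^T) W_orth mul1mx. Qed.

Lemma mxnorm2_isometryr m n (M : 'M[R]_(m, n)) (W : 'M[R]_n) :
  W^T *m W = 1%:M -> mxnorm2 (M *m W^T) = mxnorm2 M.
Proof.
move=> W_orth; rewrite /mxnorm2 /mxdot trmx_mul trmxK -mulmxA (mxtrace_mulC W).
by rewrite -!mulmxA W_orth mulmx1.
Qed.

Lemma mxdot_sqr_le m n (M N : 'M[R]_(m, n)) : mxdot M N ^+ 2 <= mxnorm2 M * mxnorm2 N.
Proof.
have [N0|] := eqVneq (mxnorm2 N) 0.
  by rewrite N0 mulr0 (mxnorm2_eq0 N0) /mxdot mulmx0 mxtrace0 expr0n.
rewrite neq_lt ltNge mxnorm2_ge0 /= => N_gt0.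
have := mxnorm2_ge0 (M + (- (mxdot M N / mxnorm2 N)) *: N).
rewrite mxnorm2D mxdotZr mxnorm2Z => h.
rewrite -ler_pdivrMr // -subr_ge0; apply: le_trans h _.
rewrite le_eqVlt; apply/orP; left; apply/eqP; field.
by rewrite lt0r_neq0.
Qed.

Lemma mxnorm2_mul_le m n (M : 'M[R]_(m, n)) (x : 'cV[R]_n) :
  mxnorm2 (M *m x) <= mxnorm2 M * mxnorm2 x.
Proof.
have rowE i : (M *m x) i 0 = mxdot (row i M)^T x.
  by rewrite /mxdot trmxK /mxtrace big_ord1 !mxE; apply: eq_bigr => j _; rewrite !mxE.
rewrite mxnorm2E mxnorm2E mulr_suml; apply: ler_sum => i _.
rewrite big_ord1 rowE; apply: le_trans (mxdot_sqr_le _ _) _.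
by rewrite mxnorm2_tr mxnorm2E big_ord1; under eq_bigr do rewrite mxE.
Qed.

End FrobeniusInnerProduct.

Section SpectralNorm.
Variable R : realType.

Lemma vnormE n (x : 'cV[R]_n) : vnorm x = Num.sqrt (mxnorm2 x).
Proof. by rewrite /vnorm mxnorm2E; congr Num.sqrt; apply: eq_bigr => i _; rewrite big_ord1. Qed.

Lemma vnorm_ge0 n (x : 'cV[R]_n) : 0 <= vnorm x.
Proof. by rewrite vnormE sqrtr_ge0. Qed.

Lemma sqr_vnorm n (x : 'cV[R]_n) : vnorm x ^+ 2 = mxnorm2 x.
Proof. by rewrite vnormE sqr_sqrtr // mxnorm2_ge0. Qed.

Lemma sqr_frob_norm m n (M : 'M[R]_(m, n)) : frob_norm M ^+ 2 = mxnorm2 M.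
Proof. by rewrite /frob_norm -mxnorm2E sqr_sqrtr // mxnorm2_ge0. Qed.

Lemma vnormZ n a (x : 'cV[R]_n) : vnorm (a *: x) = `|a| * vnorm x.
Proof. by rewrite !vnormE mxnorm2Z sqrtrM ?sqr_ge0 // sqrtr_sqr. Qed.

Lemma vnorm_delta n (i : 'I_n) : vnorm (delta_mx i 0 : 'cV[R]_n) = 1.
Proof.
rewrite vnormE mxnorm2E (bigD1 i) //= big_ord1 mxE !eqxx expr1n big1 ?addr0 ?sqrtr1 //.
by move=> j ji; rewrite big_ord1 mxE (negbTE ji) expr0n.
Qed.

Lemma vnorm_mul_spec_le m n (M : 'M[R]_(m, n)) (x : 'cV[R]_n) :
  vnorm (M *m x) <= spec_norm M * vnorm x.
Proof.
have frob_bound y : vnorm (M *m y) <= Num.sqrt (mxnorm2 M) * vnorm y.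
  by rewrite !vnormE -sqrtrM ?mxnorm2_ge0 // ler_wsqrtr // mxnorm2_mul_le.
have [x0|x_neq0] := eqVneq (vnorm x) 0.
  by have := frob_bound x; rewrite x0 !mulr0.
have x_gt0 : 0 < vnorm x by rewrite lt_def x_neq0 vnorm_ge0.
have : vnorm (M *m ((vnorm x)^-1 *: x)) <= spec_norm M.
  apply: ub_le_sup; last first.
    exists ((vnorm x)^-1 *: x); split => //.
    by rewrite vnormZ ger0_norm ?invr_ge0 ?vnorm_ge0 // mulVf.
  exists (Num.sqrt (mxnorm2 M)) => _ [y [y1 ->]].
  by have := frob_bound y; rewrite y1 mulr1.
by rewrite -scalemxAr vnormZ ger0_norm ?invr_ge0 ?vnorm_ge0 // ler_pdivrMl // mulrC.
Qed.

Lemma spec_norm_le m n (M : 'M[R]_(m, n)) (B : R) : (0 < n)%N ->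
  (forall x : 'cV[R]_n, vnorm x = 1 -> vnorm (M *m x) <= B) -> spec_norm M <= B.
Proof.
move=> n_gt0 hB; apply: ge_sup; last by move=> _ [x [x1 ->]]; apply: hB.
pose e0 : 'cV[R]_n := delta_mx (Ordinal n_gt0) 0.
by exists (vnorm (M *m e0)), e0; rewrite vnorm_delta.
Qed.

Lemma spec_norm_ge0 m n (M : 'M[R]_(m, n)) : (0 < n)%N -> 0 <= spec_norm M.
Proof.
move=> n_gt0; have := vnorm_mul_spec_le M (delta_mx (Ordinal n_gt0) 0).
by rewrite vnorm_delta mulr1; apply: le_trans; apply: vnorm_ge0.
Qed.

Lemma mxnorm2_mul_spec_le m n (M : 'M[R]_(m, n)) (x : 'cV[R]_n) :
  mxnorm2 (M *m x) <= spec_norm M ^+ 2 * mxnorm2 x.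
Proof.
by rewrite -!sqr_vnorm -exprMn; apply: ler_wXn2r (vnorm_mul_spec_le M x); apply: vnorm_ge0.
Qed.

(* |M^T y|^2 = <y, M M^T y> <= |y| |M (M^T y)| <= |y| ||M|| |M^T y| *)
Lemma mxnorm2_trmx_mul_spec_le m n (M : 'M[R]_(m, n)) (y : 'cV[R]_m) : (0 < n)%N ->
  mxnorm2 (M^T *m y) <= spec_norm M ^+ 2 * mxnorm2 y.
Proof.
move=> n_gt0; set v := M^T *m y.
have v2 : mxnorm2 v = mxdot y (M *m v) by rewrite /mxnorm2 /mxdot /v trmx_mul trmxK !mulmxA.
have CS := mxdot_sqr_le y (M *m v); have Mv := mxnorm2_mul_spec_le M v.
rewrite -v2 in CS.
have := mxnorm2_ge0 y; have := mxnorm2_ge0 (M *m v); have := spec_norm_ge0 M n_gt0.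
have [v0|v_gt0] := eqVneq (mxnorm2 v) 0; first by rewrite v0; nra.
have : 0 < mxnorm2 v by rewrite lt_def v_gt0 mxnorm2_ge0.
nra.
Qed.

End SpectralNorm.

Section SvdDiag.
Variable R : realType.
Implicit Types f g : nat -> R.

Lemma sum_ord_if_eq a j (x : R) :
  \sum_(i < a) (if (i : nat) == j then x else 0) = if (j < a)%N then x else 0.
Proof. by rewrite -big_mkcond /= (big_ord1_eq _ (fun _ => x)). Qed.

Lemma eq_svd_diag a b f g : (forall i, (i < a)%N -> (i < b)%N -> f i = g i) ->
  (svd_diag f : 'M[R]_(a, b)) = svd_diag g.
Proof. by move=> fg; apply/matrixP => i j; rewrite !mxE; case: eqP => // ij; rewrite fg // -ij. Qed.

Lemma svd_diag1 n : (1%:M : 'M[R]_n) = svd_diag (fun _ => 1).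
Proof. by apply/matrixP => i j; rewrite !mxE -val_eqE /=; case: eqP. Qed.

Lemma tr_svd_diag a b f : (svd_diag f : 'M[R]_(a, b))^T = svd_diag f.
Proof. by apply/matrixP => i j; rewrite !mxE eq_sym; case: eqP => // ->. Qed.

Lemma mul_svd_diag a b c f g :
  (svd_diag f : 'M[R]_(a, b)) *m (svd_diag g : 'M[R]_(b, c)) =
  svd_diag (fun i => if (i < b)%N then f i * g i else 0).
Proof.
apply/matrixP => i l; rewrite !mxE.
under eq_bigr => j _ do rewrite !mxE eq_sym [in X in X * _](fun_if (fun b => b)).
rewrite (eq_bigr (fun j : 'I_b =>
  if (j : nat) == i then f i * (if (i : nat) == l then g l else 0) else 0)).
  by rewrite sum_ord_if_eq; case: eqVneq => [->|_]; rewrite ?mulr0; case: ifP.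
by move=> j _; case: eqP => [->|_]; rewrite ?mul0r.
Qed.

Lemma svd_diag_exp n q f : (svd_diag f : 'M[R]_n) ^+ q = svd_diag (fun i => f i ^+ q).
Proof.
elim: q => [|q IHq].
  by rewrite expr0 -[1]/(1%:M) svd_diag1; apply: eq_svd_diag => *; rewrite expr0.
by rewrite exprS IHq -mulmxE mul_svd_diag; apply: eq_svd_diag => i i_lt _; rewrite i_lt exprS.
Qed.

Lemma svd_diag_mulV n f : (forall i, (i < n)%N -> f i != 0) ->
  (svd_diag f : 'M[R]_n) *m svd_diag (fun i => (f i)^-1) = 1%:M.
Proof.
move=> f_neq0; rewrite mul_svd_diag svd_diag1.
by apply: eq_svd_diag => i i_lt _; rewrite i_lt mulfV ?f_neq0.
Qed.

Lemma drsubmx_svd_diag k a b f :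
  drsubmx (svd_diag f : 'M[R]_(k + a, k + b)) = svd_diag (fun j => f (k + j)%N).
Proof. by apply/matrixP => i j; rewrite !mxE /= eqn_add2l. Qed.

Lemma svd_diag_block k a b f : (svd_diag f : 'M[R]_(k + a, k + b)) =
  block_mx (svd_diag f) 0 0 (svd_diag (fun j => f (k + j)%N)).
Proof.
rewrite -drsubmx_svd_diag -[LHS]submxK; congr block_mx; apply/matrixP => i j; rewrite !mxE //=.
  by case: eqP => // ij; move: (ltn_ord i); rewrite ij ltnNge leq_addr.
by case: eqP => // ij; move: (ltn_ord j); rewrite -ij ltnNge leq_addr.
Qed.

Lemma svd_diag_mul_col_mx k a b f (G : 'M[R]_(b, k)) (K : 'M[R]_k) :
  (svd_diag f : 'M[R]_(k + a, k + b)) *m col_mx 1%:M G *m K =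
  col_mx (svd_diag f *m K) (svd_diag (fun j => f (k + j)%N) *m G *m K).
Proof. by rewrite svd_diag_block mul_block_col mulmx1 !mul0mx addr0 add0r mul_col_mx. Qed.

Lemma mxnorm2_svd_diag_mul a b f (v : 'cV[R]_b) :
  mxnorm2 ((svd_diag f : 'M[R]_(a, b)) *m v) =
  \sum_(j < b) (if (j < a)%N then (f j * v j 0) ^+ 2 else 0).
Proof.
have sqr_sum_if (i : nat) (y : 'I_b -> R) :
    (\sum_(j < b) (if i == j then y j else 0)) ^+ 2 = \sum_(j < b) (if i == j then y j ^+ 2 else 0).
  have [i_lt|i_ge] := ltnP i b; last first.
    by rewrite !big1 ?expr0n // => j _; case: eqP => // ij; move: (ltn_ord j);
      rewrite -ij ltnNge i_ge.
  rewrite (bigD1 (Ordinal i_lt)) // [RHS](bigD1 (Ordinal i_lt)) //= eqxx !big1 ?addr0 //.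
    by move=> j ji; case: eqP => // ij; case/eqP: ji; apply: val_inj.
  by move=> j ji; case: eqP => // ij; case/eqP: ji; apply: val_inj.
rewrite mxnorm2E (eq_bigr (fun i : 'I_a =>
  \sum_(j < b) (if (i : nat) == j then (f j * v j 0) ^+ 2 else 0))).
  by rewrite exchange_big /=; apply: eq_bigr => j _; rewrite sum_ord_if_eq.
move=> i _; rewrite big_ord1 mxE -sqr_sum_if; congr (_ ^+ 2); apply: eq_bigr => j _.
by rewrite mxE; case: ifP; rewrite ?mul0r.
Qed.

Lemma mxnorm2_svd_diag_mul_le a b f (v : 'cV[R]_b) (B : R) :
  (forall i, (i < a)%N -> (i < b)%N -> f i ^+ 2 <= B ^+ 2) ->
  mxnorm2 ((svd_diag f : 'M[R]_(a, b)) *m v) <= B ^+ 2 * mxnorm2 v.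
Proof.
move=> fB; rewrite mxnorm2_svd_diag_mul mxnorm2E mulr_sumr; apply: ler_sum => j _.
rewrite big_ord1; case: ifP => j_lt; last by rewrite mulr_ge0 ?sqr_ge0.
by rewrite exprMn; apply: ler_wpM2r; [exact: sqr_ge0 | exact: fB].
Qed.

Lemma vnorm_svd_diag_mul_le a b f (v : 'cV[R]_b) (B : R) : 0 <= B ->
  (forall i, (i < a)%N -> (i < b)%N -> f i ^+ 2 <= B ^+ 2) ->
  vnorm ((svd_diag f : 'M[R]_(a, b)) *m v) <= B * vnorm v.
Proof.
move=> B_ge0 /(mxnorm2_svd_diag_mul_le v) fB.
by rewrite !vnormE -(ger0_norm B_ge0) -sqrtr_sqr -sqrtrM ?sqr_ge0 // ler_wsqrtr.
Qed.

End SvdDiag.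

Section SinAngles.
Variable R : realType.

Lemma sin_angles_mxnorm2 m a b (X : 'M[R]_(m, a)) (Y : 'M[R]_(m, b)) (D : 'M[R]_b) :
  sin_angles X Y D -> exists2 W : 'M[R]_b, W^T *m W = 1%:M &
    forall r (Z : 'M[R]_(b, r)), mxnorm2 (D *m Z) = mxnorm2 ((1%:M - X *m X^T) *m Y *m (W *m Z)).
Proof.
move=> [_ _ _ [W1 [W2 [W1_orth W2_orth ->]]]]; exists W2 => // r Z.
by rewrite !mulmxA -(mulmxA _ W2^T) W2_orth mulmx1 -mulmxA (mxnorm2_isometryl _ W1_orth).
Qed.

Section Resolvent.
Variables (n k : nat) (F : 'M[R]_(n, k)).

Let N : 'M[R]_k := 1%:M + F^T *m F.
Let Z : 'M[R]_k := invmx N.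
Let u (j : 'I_n) : 'cV[R]_k := F^T *m delta_mx j (0 : 'I_1).

Lemma unitmx_1Dgram : N \in unitmx.
Proof.
rewrite -row_free_unit -kermx_eq0; apply/eqP; set K := kermx N.
suff K0 : mxnorm2 K^T = 0 by rewrite -[K]trmxK (mxnorm2_eq0 K0) trmx0.
have : mxnorm2 K^T + mxnorm2 (F *m K^T) = 0.
  have := congr1 (fun M => \tr (M *m K^T)) (mulmx_ker N).
  rewrite /= mul0mx mxtrace0 /N mulmxDr mulmx1 mulmxDl mxtraceD => <-.
  by rewrite /mxnorm2 /mxdot !trmx_mul !trmxK !mulmxA.
by have := mxnorm2_ge0 K^T; have := mxnorm2_ge0 (F *m K^T); lra.
Qed.

Let NZ : N *m Z = 1%:M. Proof. exact: mulmxV unitmx_1Dgram. Qed.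
Let ZN : Z *m N = 1%:M. Proof. exact: mulVmx unitmx_1Dgram. Qed.
Let trZ : Z^T = Z.
Proof.
have trN : N^T = N by rewrite /N linearD /= tr_scalar_mx trmx_mul trmxK.
by rewrite /Z trmx_inv trN.
Qed.
Let gramE : F^T *m F = N - 1%:M.
Proof. by rewrite /N addrAC subrr add0r. Qed.

(* Z F^T F Z = Z (N - 1) Z = Z - Z^2, so (1 - Z)^2 + Z F^T F Z = 1 - Z. *)
Lemma mxnorm2_resolvent : mxnorm2 (1%:M - Z) + mxnorm2 (F *m Z) = \tr (1%:M - Z).
Proof.
have ZgramZ : Z *m F^T *m (F *m Z) = Z - Z *m Z.
  by rewrite mulmxA -(mulmxA Z) gramE mulmxBr ZN mulmx1 mulmxBl mul1mx.
rewrite /mxnorm2 /mxdot -mxtraceD; congr mxtrace.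
rewrite [(1%:M - Z)^T]linearB /= trmx1 trZ trmx_mul trZ ZgramZ.
by rewrite mulmxBl mul1mx mulmxBr mulmx1 subrK.
Qed.

Lemma trace_resolvent : \tr (1%:M - Z) = \sum_j mxdot (u j) (Z *m u j).
Proof.
have entryE j (M : 'M[R]_n) : M j j = \tr ((delta_mx j 0)^T *m (M *m delta_mx j (0 : 'I_1))).
  by rewrite /mxtrace big_ord1 trmx_delta -colE -rowE !mxE.
have -> : 1%:M - Z = F^T *m (F *m Z) by rewrite mulmxA gramE mulmxBl NZ mul1mx.
rewrite mxtrace_mulC /mxtrace; apply: eq_bigr => j _.
by rewrite (entryE j) /mxdot /u trmx_mul trmxK !mulmxA.
Qed.

(* With y = Z u: s := <u, y> = |y|^2 + |F y|^2, s = (F y)_j and s^2 <= |u|^2 |y|^2. *)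
Lemma mxdot_resolvent_le j : mxdot (u j) (Z *m u j) <= mxnorm2 (u j) / (1 + mxnorm2 (u j)).
Proof.
set y := Z *m u j; set s := mxdot (u j) y.
have s_split : s = mxnorm2 y + mxnorm2 (F *m y).
  have Ny : N *m y = u j by rewrite /y mulmxA NZ mul1mx.
  rewrite /s mxdotC /mxdot -Ny /N mulmxDl mul1mx mulmxDr mxtraceD.
  by rewrite /mxnorm2 /mxdot [(F *m y)^T]trmx_mul !mulmxA.
have s_entry : s ^+ 2 <= mxnorm2 (F *m y).
  have -> : s = (F *m y) j 0.
    by rewrite /s /mxdot /u trmx_mul trmxK trmx_delta -mulmxA /mxtrace big_ord1 -rowE mxE.
  exact: mxentry_sqr_le.
have CS : s ^+ 2 <= mxnorm2 (u j) * mxnorm2 y by apply: mxdot_sqr_le.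
have := mxnorm2_ge0 (u j); have := mxnorm2_ge0 y; have := mxnorm2_ge0 (F *m y).
by move=> *; rewrite ler_pdivlMr; nra.
Qed.

Lemma mxnorm2_resolvent_le :
  mxnorm2 (1%:M - Z) + mxnorm2 (F *m Z) <= \sum_j mxnorm2 (u j) / (1 + mxnorm2 (u j)).
Proof.
by rewrite mxnorm2_resolvent trace_resolvent; apply: ler_sum => j _; apply: mxdot_resolvent_le.
Qed.

End Resolvent.

Section RangeInclusion.
Variables (k N d : nat) (W : 'M[R]_(k + N)) (X : 'M[R]_(k + N, d)).
Variables (F : 'M[R]_(N, k)) (Y : 'M[R]_(d, k)).
Hypotheses (W_orth : W^T *m W = 1%:M) (X_orth : X^T *m X = 1%:M).
Hypothesis WF_in_X : W *m col_mx 1%:M F = X *m Y.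

Lemma sin_angles_residual_le r (Z Z' : 'M[R]_(k, r)) :
  mxnorm2 ((1%:M - X *m X^T) *m lsubmx W *m Z) <= mxnorm2 (Z - Z') + mxnorm2 (F *m Z').
Proof.
have WZ : lsubmx W *m Z = W *m col_mx (Z - Z') (- (F *m Z')) + X *m (Y *m Z').
  rewrite mulmxA -WF_in_X -mulmxA -mulmxDr mul_col_mx mul1mx add_col_mx subrK addNr.
  by rewrite -[in RHS](hsubmxK W) mul_row_col mulmx0 addr0.
have proj_X : (1%:M - X *m X^T) *m X = 0 by rewrite mulmxBl mul1mx -mulmxA X_orth mulmx1 subrr.
rewrite -mulmxA WZ mulmxDr (mulmxA _ X) proj_X mul0mx addr0.
set V := W *m _; set P := X^T *m V.
have -> : (1%:M - X *m X^T) *m V = V + (-1) *: (X *m P).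
  by rewrite mulmxBl mul1mx scaleN1r /P mulmxA.
rewrite (mxnorm2D V) mxdotZr mxnorm2Z mxnorm2_isometryl // sqrrN expr1n mul1r.
have -> : mxdot V (X *m P) = mxnorm2 P by rewrite /mxnorm2 /mxdot /P (trmx_mul X^T) trmxK !mulmxA.
rewrite /V mxnorm2_isometryl // mxnorm2_col_mx mxnorm2N.
by have := mxnorm2_ge0 P; lra.
Qed.

Lemma sin_angles_spec_le (D : 'M[R]_k) (T : R) : (0 < k)%N -> sin_angles X (lsubmx W) D ->
  0 <= T -> (forall z, vnorm (F *m z) <= T * vnorm z) -> spec_norm D <= T / Num.sqrt (1 + T ^+ 2).
Proof.
move=> k_gt0 /sin_angles_mxnorm2 [W2 W2_orth DE] T_ge0 FT.
apply: spec_norm_le => // x x1; set y := W2 *m x.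
have y1 : mxnorm2 y = 1 by rewrite /y mxnorm2_isometryl // -sqr_vnorm x1 expr1n.
set s := mxnorm2 (F *m y); have s_ge0 : 0 <= s := mxnorm2_ge0 _.
have sT : s <= T ^+ 2.
  have := FT y; rewrite [vnorm y]vnormE y1 sqrtr1 mulr1 => Fy.
  by rewrite /s -sqr_vnorm ler_wXn2r ?vnorm_ge0.
have := sin_angles_residual_le y ((1 + s)^-1 *: y).
have -> : y - (1 + s)^-1 *: y = (1 - (1 + s)^-1) *: y by rewrite scalerBl scale1r.
rewrite -scalemxAr !mxnorm2Z y1 -/s mulr1 -DE => res.
apply: le_of_sqr_le; first by rewrite divr_ge0 ?sqrtr_ge0.
rewrite sqr_vnorm expr_div_n sqr_sqrtr; last by lra.
apply: le_trans res (le_trans _ (ler_frac1D s_ge0 sT)).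
have s1_neq0 : 1 + s != 0 by apply: lt0r_neq0; lra.
by rewrite le_eqVlt; apply/orP; left; apply/eqP; field.
Qed.

Lemma sin_angles_frob_le (D : 'M[R]_k) : sin_angles X (lsubmx W) D ->
  frob_norm D ^+ 2 <= \sum_(j < N) (mxnorm2 (F^T *m delta_mx j (0 : 'I_1)) /
                                      (1 + mxnorm2 (F^T *m delta_mx j (0 : 'I_1)))).
Proof.
move=> /sin_angles_mxnorm2 [W2 W2_orth DE].
rewrite sqr_frob_norm -(mxnorm2_isometryr D W2_orth) DE (mulmx1C W2_orth) mulmx1.
rewrite -(mulmx1 (_ *m lsubmx W)).
apply: le_trans (sin_angles_residual_le _ (invmx (1%:M + F^T *m F))) _.
exact: mxnorm2_resolvent_le.
Qed.

End RangeInclusion.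

End SinAngles.

Section SvdAlgebra.
Variable R : realType.

Lemma MP_inverse_mulV k d (M : 'M[R]_(k, d)) (X : 'M[R]_(d, k)) :
  \rank M = k -> MP_inverse M X -> M *m X = 1%:M.
Proof.
move=> rankM [MXM _ _ _]; have M_free : row_free M by rewrite /row_free rankM.
by apply: (row_free_inj M_free); rewrite /= mul1mx.
Qed.

Lemma exp_orth_conj n (V M : 'M[R]_n) q : V^T *m V = 1%:M ->
  (V *m M *m V^T) ^+ q = V *m M ^+ q *m V^T.
Proof.
move=> V_orth; elim: q => [|q IHq]; first by rewrite !expr0 mulmx1 (mulmx1C V_orth).
rewrite !exprS IHq -!mulmxE !mulmxA -(mulmxA _ V^T V) V_orth mulmx1.
by rewrite -!mulmxA.
Qed.

Lemma svd_gram_exp m n (A : 'M[R]_(m, n)) (U : 'M[R]_m) (V : 'M[R]_n) (S : 'M[R]_(m, n)) q :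
  U^T *m U = 1%:M -> V^T *m V = 1%:M -> A = U *m S *m V^T ->
  (A^T *m A) ^+ q *m A^T = V *m ((S^T *m S) ^+ q *m S^T) *m U^T.
Proof.
move=> U_orth V_orth ->.
have -> : (U *m S *m V^T)^T *m (U *m S *m V^T) = V *m (S^T *m S) *m V^T.
  by rewrite !trmx_mul trmxK !mulmxA -(mulmxA _ U^T U) U_orth mulmx1 -!mulmxA.
rewrite exp_orth_conj // !trmx_mul trmxK !mulmxA -(mulmxA _ V^T V) V_orth mulmx1.
by rewrite -!mulmxA.
Qed.

End SvdAlgebra.

Section TruncatedSvd.
Variable R : realType.
Variables (k n' : nat) (sv : nat -> R).
Hypotheses (k_gt0 : (0 < k)%N) (n'_gt0 : (0 < n')%N).
Hypothesis sv_nonincr : forall i j : nat, (i <= j < k + n')%N -> sv j <= sv i.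
Hypothesis sv_ge0 : forall i : nat, (i < k + n')%N -> 0 <= sv i.
Hypothesis svk_gt0 : 0 < sv k.-1.

(* Diagonal entries of the rectangular powers (Sigma^T Sigma)^q Sigma^T and
   Sigma (Sigma^T Sigma)^q Sigma^T: only the first k + n' singular values exist. *)
Definition svpow e i : R := if (i < k + n')%N then sv i ^+ e else 0.

Let delta := sv k / sv k.-1.
Let gamma := sv (k + n').-1 / sv 0.

Definition sin_bound e c Sp : R :=
  delta ^+ e * c * Sp / (sv k.-1 * Num.sqrt (1 + gamma ^+ (e.+1 * 2) * c ^+ 2)).

Let one_Dsqr_gt0 (x : R) : 0 < 1 + x ^+ 2.
Proof. by have := sqr_ge0 x; lra. Qed.

Let svk_ge0 : 0 <= sv k. Proof. by apply: sv_ge0; lia. Qed.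
Let sv_head_ge i : (i < k)%N -> sv k.-1 <= sv i. Proof. by move=> ?; apply: sv_nonincr; lia. Qed.
Let sv_head_gt0 i : (i < k)%N -> 0 < sv i. Proof. by move/sv_head_ge; apply: lt_le_trans. Qed.
Let delta_ge0 : 0 <= delta. Proof. by apply: divr_ge0 => //; exact: ltW. Qed.
Let gamma_ge0 : 0 <= gamma.
Proof. by apply: divr_ge0; [apply: sv_ge0; lia | exact/ltW/sv_head_gt0]. Qed.

Let gamma_le j : (j < n')%N -> gamma <= sv (k + j) / sv k.-1.
Proof.
move=> j_lt; apply: ler_pM.
- by apply: sv_ge0; lia.
- by rewrite invr_ge0 ltW ?sv_head_gt0.
- by apply: sv_nonincr; lia.
- by rewrite lef_pV2 ?posrE ?sv_head_ge ?(sv_head_gt0 k_gt0).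
Qed.

Lemma spec_norm_svd_tail m' : (n' <= m')%N ->
  sv k <= spec_norm (drsubmx (svd_diag sv : 'M[R]_(k + m', k + n'))).
Proof.
move=> n'm'; set e0 := delta_mx (Ordinal n'_gt0) 0 : 'cV[R]_n'.
have := vnorm_mul_spec_le (drsubmx (svd_diag sv : 'M[R]_(k + m', k + n'))) e0.
rewrite vnorm_delta mulr1; apply: le_trans.
rewrite drsubmx_svd_diag vnormE mxnorm2_svd_diag_mul (bigD1 (Ordinal n'_gt0)) //= big1 ?addr0.
  by rewrite (leq_trans n'_gt0 n'm') mxE !eqxx mulr1 addn0 sqrtr_sqr ger0_norm.
by move=> j j0; rewrite mxE (negbTE j0) mulr0 expr0n; case: ifP.
Qed.

Lemma sqr_frob_svd_tail m' : (n' <= m')%N ->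
  frob_norm (drsubmx (svd_diag sv : 'M[R]_(k + m', k + n'))) ^+ 2 = \sum_(j < n') sv (k + j) ^+ 2.
Proof.
move=> n'm'; rewrite sqr_frob_norm drsubmx_svd_diag mxnorm2E exchange_big /=.
apply: eq_bigr => j _.
rewrite (eq_bigr (fun i : 'I_m' => if (i : nat) == j then sv (k + j) ^+ 2 else 0)).
  by rewrite sum_ord_if_eq (leq_trans (ltn_ord j) n'm').
by move=> i _; rewrite mxE; case: ifP => // _; rewrite expr0n.
Qed.

Let svd_diag_gram_exp m' q : (n' <= m')%N ->
  let S := svd_diag sv : 'M[R]_(k + m', k + n') in
  (S^T *m S) ^+ q *m S^T = svd_diag (svpow (2 * q).+1).
Proof.
move=> n'm' S; rewrite /S tr_svd_diag mul_svd_diag svd_diag_exp mul_svd_diag.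
apply: eq_svd_diag => i i_lt _; have i_lt' : (i < k + m')%N by rewrite (leq_trans i_lt) ?leq_add2l.
by rewrite /svpow i_lt i_lt' -expr2 -exprM -exprSr.
Qed.

Let svd_diag_mul_gram_exp m' q : (n' <= m')%N ->
  let S := svd_diag sv : 'M[R]_(k + m', k + n') in
  S *m ((S^T *m S) ^+ q *m S^T) = svd_diag (svpow (2 * q).+2).
Proof.
move=> n'm' S; rewrite svd_diag_gram_exp // mul_svd_diag.
by apply: eq_svd_diag => i _ _; rewrite /svpow; case: (i < k + n')%N; rewrite -?exprS.
Qed.

Lemma svd_gram_exp_diag m' q (A : 'M[R]_(k + m', k + n')) (U : 'M[R]_(k + m'))
    (V : 'M[R]_(k + n')) :
  (n' <= m')%N -> U^T *m U = 1%:M -> V^T *m V = 1%:M -> A = U *m svd_diag sv *m V^T ->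
  (A^T *m A) ^+ q *m A^T = V *m svd_diag (svpow (2 * q).+1) *m U^T /\
  A *m ((A^T *m A) ^+ q *m A^T) = U *m svd_diag (svpow (2 * q).+2) *m U^T.
Proof.
move=> n'm' U_orth V_orth svdA; rewrite (svd_gram_exp q U_orth V_orth svdA) -svd_diag_gram_exp //.
split=> //.
by rewrite {1}svdA -!mulmxA (mulmxA V^T) V_orth mul1mx -svd_diag_mul_gram_exp // !mulmxA.
Qed.

Section TailMatrix.
Variables (m' : nat) (G : 'M[R]_(m', k)).

Let c := spec_norm G.
Let c_ge0 : 0 <= c. Proof. exact: spec_norm_ge0. Qed.
Let kappa e := delta ^+ e * c / sv k.-1.
Let L e := gamma ^+ e.+1 * c.

Let lead_inv e : 'M[R]_k := svd_diag (fun i => (sv i ^+ e)^-1).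
(* F of the range identity W [I; F] = X Y. *)
Let tail_mx e N' : 'M[R]_(N', k) := svd_diag (fun j => svpow e (k + j)) *m G *m lead_inv e.

Let svd_diag_svpow_col e N' :
  (svd_diag (svpow e) : 'M[R]_(k + N', k + m')) *m col_mx 1%:M G *m lead_inv e =
  col_mx 1%:M (tail_mx e N').
Proof.
rewrite svd_diag_mul_col_mx; congr col_mx.
rewrite (@eq_svd_diag _ k k _ (fun i => sv i ^+ e)) ?svd_diag_mulV // => i i_lt.
  by rewrite expf_neq0 // lt0r_neq0 ?sv_head_gt0.
by rewrite /svpow ltn_addr.
Qed.

Let inv_lead_le e i : (i < k)%N -> (sv i ^+ e)^-1 <= (sv k.-1 ^+ e)^-1.
Proof.
move=> i_lt; rewrite lef_pV2 ?posrE ?exprn_gt0 // ?sv_head_gt0 //.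
by apply: ler_wXn2r; [exact: ltW | exact: sv_head_ge].
Qed.

Let vnorm_lead_inv_le e z : vnorm (lead_inv e *m z) <= (sv k.-1 ^+ e)^-1 * vnorm z.
Proof.
apply: vnorm_svd_diag_mul_le => [|i i_lt _]; first by rewrite invr_ge0 exprn_ge0 ?ltW.
by apply: ler_wXn2r (inv_lead_le e i_lt); rewrite invr_ge0 exprn_ge0 ?ltW ?sv_head_gt0.
Qed.

Let svpow_tail_sqr_le e j : svpow e (k + j) ^+ 2 <= (sv k ^+ e) ^+ 2.
Proof.
rewrite /svpow; case: ifP => j_lt; last by rewrite expr0n sqr_ge0.
have svkj_ge0 : 0 <= sv (k + j) by apply: sv_ge0.
apply: ler_wXn2r; first exact: exprn_ge0.
by apply: ler_wXn2r => //; apply: sv_nonincr; lia.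
Qed.

Let vnorm_tail_mx_le e N' z :
  vnorm (tail_mx e N' *m z) <= sv k ^+ e * c / sv k.-1 ^+ e * vnorm z.
Proof.
have tail_le (w : 'cV[R]_m') :
    vnorm ((svd_diag (fun j => svpow e (k + j)) : 'M_(N', m')) *m w) <= sv k ^+ e * vnorm w.
  by apply: vnorm_svd_diag_mul_le => [|i _ _]; [exact: exprn_ge0 | exact: svpow_tail_sqr_le].
rewrite /tail_mx -!mulmxA; apply: le_trans (tail_le _) _.
rewrite -!mulrA; apply: ler_wpM2l; first exact: exprn_ge0.
apply: le_trans (vnorm_mul_spec_le _ _) _.
by apply: ler_wpM2l => //; apply: vnorm_lead_inv_le.
Qed.

Let mxnorm2_tr_tail_mx_le e N' (j : 'I_N') :
  mxnorm2 ((tail_mx e N')^T *m delta_mx j (0 : 'I_1)) <= (svpow e (k + j) * c / sv k.-1 ^+ e) ^+ 2.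
Proof.
rewrite /tail_mx !trmx_mul tr_svd_diag -!mulmxA.
apply: le_trans (mxnorm2_svd_diag_mul_le _ (B := (sv k.-1 ^+ e)^-1) _) _.
  move=> i i_lt _; apply: ler_wXn2r (inv_lead_le e i_lt).
  by rewrite invr_ge0 exprn_ge0 ?ltW ?sv_head_gt0.
have -> : (svpow e (k + j) * c / sv k.-1 ^+ e) ^+ 2 =
    ((sv k.-1 ^+ e)^-1) ^+ 2 * (c ^+ 2 * svpow e (k + j) ^+ 2) by rewrite !exprMn; ring.
apply: ler_wpM2l; first exact: sqr_ge0.
apply: le_trans (mxnorm2_trmx_mul_spec_le _ _ k_gt0) _; apply: ler_wpM2l; first exact: sqr_ge0.
rewrite tr_svd_diag mxnorm2_svd_diag_mul (bigD1 j) //= big1 ?addr0.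
  by rewrite mxE !eqxx mulr1; case: ifP => _ //; rewrite sqr_ge0.
by move=> l lj; rewrite mxE (negbTE lj) mulr0 expr0n; case: ifP.
Qed.

Let kappa_ge0 e : 0 <= kappa e.
Proof. by apply: divr_ge0; [apply: mulr_ge0; [exact: exprn_ge0 | exact: c_ge0] | exact: ltW]. Qed.

Let L_ge0 e : 0 <= L e. Proof. by rewrite /L mulr_ge0 ?exprn_ge0. Qed.

Let sqrt_1DL_gt0 e : 0 < Num.sqrt (1 + L e ^+ 2).
Proof. by rewrite sqrtr_gt0 one_Dsqr_gt0. Qed.

Let tail_col e N' (j : 'I_N') := mxnorm2 ((tail_mx e N')^T *m delta_mx j (0 : 'I_1)).

(* With r := sv (k + j) / sv k.-1, the bound of the j-th term is b = r^(e+1) c,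
   and gamma <= r <= delta gives L e <= b <= sv (k + j) * kappa e. *)
Let tail_frob_term_le e N' (j : 'I_N') :
  tail_col e.+1 j / (1 + tail_col e.+1 j) <=
  (if (j < n')%N then sv (k + j) ^+ 2 else 0) * (kappa e ^+ 2 / (1 + L e ^+ 2)).
Proof.
set b := svpow e.+1 (k + j) * c / sv k.-1 ^+ e.+1.
apply: le_trans (ler_frac1D (mxnorm2_ge0 _) (mxnorm2_tr_tail_mx_le e.+1 j)) _; rewrite -/b.
rewrite /b /svpow ltn_add2l; case: ifP => j_lt; last by rewrite !mul0r expr0n mul0r.
set r := sv (k + j) / sv k.-1.
have r_ge0 : 0 <= r by apply: divr_ge0; [apply: sv_ge0; lia | exact: ltW].
have r_le : r <= delta by apply: ler_wpM2r; [rewrite invr_ge0 ltW | apply: sv_nonincr; lia].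
have -> : sv (k + j) ^+ e.+1 * c / sv k.-1 ^+ e.+1 = r ^+ e.+1 * c by rewrite expr_div_n mulrAC.
have L_le : L e <= r ^+ e.+1 * c by apply: ler_wpM2r => //; apply: ler_wXn2r => //; apply: gamma_le.
have b_le : r ^+ e.+1 * c <= sv (k + j) * kappa e.
  have -> : r ^+ e.+1 * c = sv (k + j) * (r ^+ e * c / sv k.-1) by rewrite exprSr {2}/r; ring.
  apply: ler_wpM2l; first by apply: sv_ge0; lia.
  apply: ler_wpM2r; first by rewrite invr_ge0 ltW.
  by apply: ler_wpM2r => //; apply: ler_wXn2r.
have L2_ge0 := sqr_ge0 (L e); have b_ge0 : 0 <= r ^+ e.+1 * c by apply: le_trans L_le.
rewrite mulrA; apply: le_trans (_ : _ <= (r ^+ e.+1 * c) ^+ 2 / (1 + L e ^+ 2)) _.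
  apply: ler_wpM2l; first exact: sqr_ge0.
  by rewrite lef_pV2 ?posrE ?one_Dsqr_gt0 // lerD2l; apply: ler_wXn2r.
apply: ler_wpM2r; first by rewrite invr_ge0; lra.
by rewrite -exprMn; apply: ler_wXn2r.
Qed.

Let tail_frob_sum_le e N' : (n' <= N')%N -> (n' <= m')%N ->
  \sum_(j < N') (tail_col e.+1 j / (1 + tail_col e.+1 j)) <=
  frob_norm (drsubmx (svd_diag sv : 'M[R]_(k + m', k + n'))) ^+ 2 * (kappa e ^+ 2 / (1 + L e ^+ 2)).
Proof.
move=> n'N' n'm'; rewrite sqr_frob_svd_tail // (big_ord_widen _ (fun j => sv (k + j) ^+ 2) n'N').
rewrite mulr_suml [X in _ <= X]big_mkcond; apply: ler_sum => j _.
by apply: le_trans (tail_frob_term_le e j) _; case: ifP; rewrite ?mul0r.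
Qed.

Let sin_boundE e Sp : sin_bound e c Sp = kappa e * Sp / Num.sqrt (1 + L e ^+ 2).
Proof.
have := sqrt_1DL_gt0 e; rewrite /sin_bound /kappa /L exprMn -exprM => sqrt_gt0.
by field; rewrite !lt0r_neq0.
Qed.

Let sin_bound_spec e Sp (T := sv k ^+ e.+1 * c / sv k.-1 ^+ e.+1) :
  sv k <= Sp -> T / Num.sqrt (1 + T ^+ 2) <= sin_bound e c Sp.
Proof.
move=> svk_le; have TE : T = sv k * kappa e.
  by rewrite /T /kappa /delta expr_div_n !exprS; field; rewrite expf_neq0 lt0r_neq0.
have LT : L e <= T.
  rewrite /T mulrAC -expr_div_n -/delta; apply: ler_wpM2r => //; apply: ler_wXn2r => //.
  by apply: le_trans (gamma_le n'_gt0) _; rewrite addn0.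
have T_ge0 : 0 <= T by apply: le_trans LT.
apply: le_trans (_ : _ <= T / Num.sqrt (1 + L e ^+ 2)) _.
  apply: ler_wpM2l => //; rewrite lef_pV2 ?posrE ?sqrtr_gt0 ?one_Dsqr_gt0 //.
  by apply: ler_wsqrtr; rewrite lerD2l; apply: ler_wXn2r.
rewrite sin_boundE TE [_ * kappa e]mulrC; apply: ler_wpM2r; first by rewrite invr_ge0 ltW.
by apply: ler_wpM2l.
Qed.

Let sin_bound_frob e Sf x : 0 <= Sf ->
  x ^+ 2 <= Sf ^+ 2 * (kappa e ^+ 2 / (1 + L e ^+ 2)) -> x <= sin_bound e c Sf.
Proof.
move=> Sf_ge0 x2; rewrite sin_boundE; apply: le_of_sqr_le.
  by apply: divr_ge0; [exact: mulr_ge0 (kappa_ge0 e) Sf_ge0 | exact: sqrtr_ge0].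
suff -> : (kappa e * Sf / Num.sqrt (1 + L e ^+ 2)) ^+ 2 =
  Sf ^+ 2 * (kappa e ^+ 2 / (1 + L e ^+ 2)) by [].
by rewrite expr_div_n sqr_sqrtr ?ltW ?one_Dsqr_gt0 //; ring.
Qed.

Lemma sin_angles_svd_le nk e N' d (W : 'M[R]_(k + N')) (X : 'M[R]_(k + N', d))
    (Y : 'M[R]_(d, k)) (D : 'M[R]_k) :
  (n' <= N')%N -> (n' <= m')%N -> W^T *m W = 1%:M -> X^T *m X = 1%:M ->
  W *m svd_diag (svpow e.+1) *m col_mx 1%:M G = X *m Y -> sin_angles X (lsubmx W) D ->
  mnorm nk D <= sin_bound e c (mnorm nk (drsubmx (svd_diag sv : 'M[R]_(k + m', k + n')))).
Proof.
move=> n'N' n'm' W_orth X_orth WG D_angles.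
have WF : W *m col_mx 1%:M (tail_mx e.+1 N') = X *m (Y *m lead_inv e.+1).
  by rewrite -svd_diag_svpow_col !mulmxA WG.
case: nk => /=.
- apply: le_trans (sin_angles_spec_le W_orth X_orth WF k_gt0 D_angles _ (vnorm_tail_mx_le _ _)) _.
    by apply: divr_ge0; [apply: mulr_ge0; [exact: exprn_ge0 | exact: c_ge0] | apply/exprn_ge0/ltW].
  exact/sin_bound_spec/spec_norm_svd_tail.
- apply: sin_bound_frob; first exact: sqrtr_ge0.
  by apply: le_trans (sin_angles_frob_le W_orth X_orth WF D_angles) (tail_frob_sum_le _ n'N' n'm').
Qed.

End TailMatrix.

End TruncatedSvd.

Unset Implicit Arguments.

Theorem theorem3 (R : realType) (k m' n' p q : nat) (nk : normkind)
  (A : 'M[R]_(k + m', k + n')) (U : 'M[R]_(k + m')) (V : 'M[R]_(k + n'))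
  (sv : nat -> R)
  (Phi : 'M[R]_(k + m', k + p)) (Phi1pinv : 'M[R]_(k + p, k))
  (Pbar : 'M[R]_(k + n', k + p)) (Q : 'M[R]_(k + m', k + p))
  (Rm Pt Rt : 'M[R]_(k + p)) (D1 D2 : 'M[R]_k) :
  (0 < k)%N -> (n' <= m')%N -> (0 < p)%N -> (p < n')%N ->
  U^T *m U = 1%:M -> V^T *m V = 1%:M ->
  (forall i j : nat, (i <= j < k + n')%N -> sv j <= sv i) ->
  (forall i : nat, (i < k + n')%N -> 0 <= sv i) ->
  A = U *m svd_diag sv *m V^T ->
  0 < sv k.-1 ->
  \rank ((lsubmx U)^T *m Phi) = k ->
  MP_inverse ((lsubmx U)^T *m Phi) Phi1pinv ->
  Pbar^T *m Pbar = 1%:M ->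
  (Pbar^T == ((A^T *m A) ^+ q *m A^T *m Phi)^T)%MS ->
  \rank ((A^T *m A) ^+ q *m A^T *m Phi) = (k + p)%N ->
  Q^T *m Q = 1%:M -> is_trig_mx Rm^T -> A *m Pbar = Q *m Rm ->
  Pt^T *m Pt = 1%:M -> is_trig_mx Rt^T -> Rm^T = Pt *m Rt ->
  sin_angles Q (lsubmx U) D1 ->
  sin_angles (Pbar *m Pt) (lsubmx V) D2 ->
  let c := spec_norm ((rsubmx U)^T *m Phi *m Phi1pinv) in
  let deltak := sv k / sv k.-1 in
  let gamma := sv (k + n')%N.-1 / sv 0%N in
  let Sperp : 'M[R]_(m', n') := drsubmx (svd_diag sv : 'M[R]_(k + m', k + n')) in
  mnorm nk D1 <= deltak ^+ (2 * q + 1) * c * mnorm nk Sperp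
                 / (sv k.-1 * Num.sqrt (1 + gamma ^+ (4 * q + 4) * c ^+ 2))
  /\
  mnorm nk D2 <= deltak ^+ (2 * q) * c * mnorm nk Sperp
                 / (sv k.-1 * Num.sqrt (1 + gamma ^+ (4 * q + 2) * c ^+ 2)).
Proof.
move=> k_gt0 n'm' _ p_lt U_orth V_orth sv_nonincr sv_ge0 svdA svk_gt0 rank1 MP.
move=> Pbar_orth range_Pbar _ Q_orth _ QR Pt_orth _ _ angQ angP c deltak gamma Sperp.
have n'_gt0 : (0 < n')%N by apply: leq_trans p_lt.
set G := (rsubmx U)^T *m Phi *m Phi1pinv.
have UPhi : U^T *m Phi *m Phi1pinv = col_mx 1%:M G.
  by rewrite -[U]hsubmxK tr_row_mx !mul_col_mx (MP_inverse_mulV rank1 MP).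
have [X0 X0E] : exists X0, (A^T *m A) ^+ q *m A^T *m Phi = Pbar *m X0.
  case/andP: range_Pbar => _ /submxP [X1 X1E].
  by exists X1^T; rewrite -[LHS]trmxK X1E trmx_mul trmxK.
have [gramA AgramA] := svd_gram_exp_diag q n'm' U_orth V_orth svdA.
have -> : (2 * q + 1 = (2 * q).+1)%N by clear - q; lia.
have -> : (4 * q + 4 = (2 * q).+2 * 2)%N by clear - q; lia.
have -> : (4 * q + 2 = (2 * q).+1 * 2)%N by clear - q; lia.
have PbarPt_orth : (Pbar *m Pt)^T *m (Pbar *m Pt) = 1%:M.
  by rewrite trmx_mul !mulmxA -(mulmxA _ Pbar^T) Pbar_orth mulmx1.
split.
- apply: (sin_angles_svd_le k_gt0 n'_gt0 sv_nonincr sv_ge0 svk_gt0 (G := G) nk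
           (Y := Rm *m X0 *m Phi1pinv) n'm' n'm' U_orth Q_orth _ angQ).
  by rewrite -UPhi !mulmxA -AgramA -(mulmxA A) X0E !mulmxA QR.
- apply: (sin_angles_svd_le k_gt0 n'_gt0 sv_nonincr sv_ge0 svk_gt0 (G := G) nk
           (Y := Pt^T *m X0 *m Phi1pinv) (leqnn n') n'm' V_orth PbarPt_orth _ angP).
  by rewrite -UPhi !mulmxA -gramA X0E -(mulmxA Pbar Pt) (mulmx1C Pt_orth) mulmx1.
Qed.
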